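(* Let $N,M_t,M_r$ be positive integers, $\mathbf G_t\in\mathbb C^{N\times M_t}$, $\mathbf G_r\in\mathbb C^{M_r\times N}$ arbitrary, $\alpha\in\mathbb C\setminus\{0\}$, $\sigma^2>0$, $T$ a positive integer, $\theta\in\mathbb R$, $\mathbf R\in\mathbb C^{M_t\times M_t}$ positive semidefinite, and $\mathbf\Phi=\mathrm{diag}(e^{j\phi_1},\dots,e^{j\phi_N})$, $\phi_n\in\mathbb R$, such that the denominator of $\widetilde{\mathrm{CRB}}_2(\mathbf R,\mathbf\Phi)$ is positive. Then $\|\mathbf b(\theta)\|^2=M_r$ and $\|\dot{\mathbf b}(\theta)\|^2=\frac{\pi^2\hat d^2\cos^2\theta\,M_r(M_r-1)(M_r+1)}{3\lambda^2}$, and if both $\|\mathbf p_r(\mathbf\Phi)\|^2=\|\mathbf G_r\mathbf\Phi^T\mathbf a(\theta)\|^2>\|\mathbf b(\theta)\|^2$ and $\|\dot{\mathbf p}_r(\mathbf\Phi)\|^2=\|\mathbf G_r\mathbf\Phi^T\dot{\mathbf a}(\theta)\|^2>\|\dot{\mathbf b}(\theta)\|^2$, then $\widetilde{\mathrm{CRB}}_1(\mathbf R,\mathbf\Phi)<\widetilde{\mathrm{CRB}}_2(\mathbf R,\mathbf\Phi)$.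
   Context: $j=\sqrt{-1}$. Fix $\hat d>0$, $\lambda>0$. $\mathbf a(\theta)\in\mathbb C^N$ has $n$-th entry $e^{j\pi(2n-N-1)\hat d\sin\theta/\lambda}$, $\mathbf b(\theta)\in\mathbb C^{M_r}$ has $m$-th entry $e^{j\pi(2m-M_r-1)\hat d\sin\theta/\lambda}$; $\dot{\mathbf a}(\theta)=\partial\mathbf a/\partial\theta=\frac{j\pi\hat d\cos\theta}{\lambda}\mathbf D_1\mathbf a(\theta)$, $\dot{\mathbf b}(\theta)=\frac{j\pi\hat d\cos\theta}{\lambda}\mathbf D_2\mathbf b(\theta)$ with $\mathbf D_1=\mathrm{diag}(1-N,3-N,\dots,N-1)$, $\mathbf D_2=\mathrm{diag}(1-M_r,3-M_r,\dots,M_r-1)$. Set $\mathbf p_t(\mathbf\Phi)=\mathbf G_t^T\mathbf\Phi^T\mathbf a(\theta)$, $\mathbf p_r(\mathbf\Phi)=\mathbf G_r\mathbf\Phi^T\mathbf a(\theta)$, $\dot{\mathbf p}_t(\mathbf\Phi)=\mathbf G_t^T\mathbf\Phi^T\dot{\mathbf a}(\theta)$, $\dot{\mathbf p}_r(\mathbf\Phi)=\mathbf G_r\mathbf\Phi^T\dot{\mathbf a}(\theta)$. The approximated CRBs for DoA estimation are $\widetilde{\mathrm{CRB}}_1(\mathbf R,\mathbf\Phi)=\frac{\sigma^2/(2T|\alpha|^2)}{\mathbf p_t^H\mathbf R^T\mathbf p_t\,\|\dot{\mathbf p}_r\|^2+\|\mathbf p_r\|^2\,\dot{\mathbf p}_t^H\mathbf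 R^T\dot{\mathbf p}_t}$ (fully-passive IRS) and $\widetilde{\mathrm{CRB}}_2(\mathbf R,\mathbf\Phi)=\frac{\sigma^2/(2T|\alpha|^2)}{\mathbf p_t^H\mathbf R^T\mathbf p_t\,\|\dot{\mathbf b}(\theta)\|^2+\|\mathbf b(\theta)\|^2\,\dot{\mathbf p}_t^H\mathbf R^T\dot{\mathbf p}_t}$ (semi-passive IRS), all $\mathbf p$'s evaluated at $\mathbf\Phi$. *)

From HB Require Import structures.
From mathcomp Require Import all_boot all_order all_algebra.
From mathcomp Require Import all_classical all_reals all_analysis.
From mathcomp Require Import complex.
Set Implicit Arguments. Unset Strict Implicit. Unset Printing Implicit Defensive.
Import Order.TTheory GRing.Theory Num.Theory.
Local Open Scope ring_scope.


Section Defs.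
Variable R : realType.

Definition expj (x : R) : R[i] := Complex (cos x) (sin x).

Definition ctr (m n : nat) (A : 'M[R[i]]_(m, n)) : 'M[R[i]]_(n, m) :=
  (map_mx (@conjc R) A)^T.

(* squared Euclidean norm ||v||^2 = v^H v, a (real) element of R[i] *)
Definition sqnorm (n : nat) (v : 'cV[R[i]]_n) : R[i] := (ctr v *m v) 0 0.

Definition psd (n : nat) (A : 'M[R[i]]_n) : Prop :=
  ctr A = A /\ forall x : 'cV[R[i]]_n, 0 <= (ctr x *m A *m x) 0 0.

(* index coefficient (2n - K - 1) for n = i+1, i : 'I_K, i.e. 2i + 1 - K *)
Definition idxc (K : nat) (i : 'I_K) : R := (2 * i + 1)%:R - K%:R.

(* steering vector of a K-element ULA: a(theta) for K = N, b(theta) for K = M_r *)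
Definition steer (K : nat) (dh lam th : R) : 'cV[R[i]]_K :=
  \col_i expj ((pi : R) * idxc i * dh * sin th / lam).

(* derivative vector  (j pi dh cos th / lam) D steer(th), D = diag(1-K,...,K-1) *)
Definition dsteer (K : nat) (dh lam th : R) : 'cV[R[i]]_K :=
  \col_i ((Complex 0 ((pi : R) * dh * cos th / lam)) * (idxc i)%:C%C * steer K dh lam th i 0).

Definition Phimx (N : nat) (phi : 'I_N -> R) : 'M[R[i]]_N :=
  diag_mx (\row_n expj (phi n)).

Definition qform (M : nat) (Rm : 'M[R[i]]_M) (q : 'cV[R[i]]_M) : R[i] :=
  (ctr q *m Rm^T *m q) 0 0.

Section CRB.
Variables (N Mt Mr T : nat) (dh lam th s2 : R) (alpha : R[i]).
Variables (Gt : 'M[R[i]]_(N, Mt)) (Gr : 'M[R[i]]_(Mr, N)).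
Variables (Rm : 'M[R[i]]_Mt) (Phi : 'M[R[i]]_N).

Definition p_t : 'cV[R[i]]_Mt := Gt^T *m Phi^T *m steer N dh lam th.
Definition p_r : 'cV[R[i]]_Mr := Gr *m Phi^T *m steer N dh lam th.
Definition dp_t : 'cV[R[i]]_Mt := Gt^T *m Phi^T *m dsteer N dh lam th.
Definition dp_r : 'cV[R[i]]_Mr := Gr *m Phi^T *m dsteer N dh lam th.

Definition crb_num : R[i] := s2%:C%C / (2 * T%:R * `|alpha| ^+ 2).

Definition den1 : R[i] :=
  qform Rm p_t * sqnorm dp_r + sqnorm p_r * qform Rm dp_t.
Definition den2 : R[i] :=
  qform Rm p_t * sqnorm (dsteer Mr dh lam th)
  + sqnorm (steer Mr dh lam th) * qform Rm dp_t.

Definition CRB1 : R[i] := crb_num / den1.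
Definition CRB2 : R[i] := crb_num / den2.
End CRB.
End Defs.

(* The steering vector has unit-modulus entries, so ||b||^2 = M_r, and
   ||db||^2 is (pi dh cos th / lam)^2 times the sum of the squared odd
   offsets (2i + 1 - M_r)^2, i.e. M_r (M_r^2 - 1) / 3.  Both CRB denominators
   are nonnegative combinations, with weights q_t^H R^T q_t >= 0 and
   dq_t^H R^T dq_t >= 0, of the squared norms in question.  Replacing ||b||^2
   and ||db||^2 by the strictly larger ||p_r||^2 and ||dp_r||^2 therefore
   increases the denominator, strictly because den2 > 0 forces one weight to be
   positive; the CRB, a positive constant over the denominator, decreases. *)
From HB Require Import structures.
From mathcomp Require Import all_boot all_order all_algebra.
From mathcomp Require Import all_classical all_reals all_analysis.
From mathcomp Require Import complex.
From mathcomp Require Import ring.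
Import Order.TTheory GRing.Theory Num.Theory.
Local Open Scope ring_scope.
Local Open Scope complex_scope.

Lemma ltr_nneg_comb (F : numDomainType) (x y u u' v v' : F) :
  0 <= x -> 0 <= y -> u < u' -> v < v' -> 0 < x * u + v * y ->
  x * u + v * y < x * u' + v' * y.
Proof.
rewrite le_eqVlt => /orP[/eqP <- | x_gt0] y_ge0 lt_uu' lt_vv' pos_comb.
  rewrite !mul0r !add0r in pos_comb *.
  have y_gt0 : 0 < y.
    by rewrite lt_def y_ge0 andbT; apply: contraTneq pos_comb => ->; rewrite mulr0 ltxx.
  by rewrite ltr_pM2r.
by apply: ltr_leD; rewrite ?ltr_pM2l // ler_wpM2r // ltW.
Qed.

Lemma ltr_pdiv2l (F : numFieldType) (c d1 d2 : F) :
  0 < c -> 0 < d2 -> d2 < d1 -> c / d1 < c / d2.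
Proof.
move=> c_gt0 d2_gt0 lt_d21.
by rewrite ltr_pM2l // ltf_pV2 ?posrE // (lt_trans d2_gt0).
Qed.

Lemma sum_sqr_idx (R : realFieldType) (n m : nat) :
  \sum_(i < n) ((2 * i + 1)%:R - m%:R) ^+ 2 =
  (4 * n%:R ^+ 3 - n%:R) / 3 - 2 * m%:R * n%:R ^+ 2 + m%:R ^+ 2 * n%:R :> R.
Proof.
elim: n => [|n IH]; first by rewrite big_ord0; field.
by rewrite big_ord_recr /= IH natrD natrM -addn1 natrD /=; field.
Qed.

Section SteeringVectors.
Variable R : realType.

Lemma sqnormE n (v : 'cV[R[i]]_n) : sqnorm v = \sum_k (v k 0)^* * v k 0.
Proof. by rewrite /sqnorm /ctr !mxE; apply: eq_bigr => k _; rewrite !mxE. Qed.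

Lemma expjJ_mul (x : R) : (expj x)^* * expj x = 1.
Proof.
rewrite /expj; simpc; apply/eqP; rewrite eq_complex /= -(cos2Dsin2 x) !expr2.
by apply/andP; split; apply/eqP; ring.
Qed.

(* q^H R^T q is the transpose of the scalar conj(q)^H R conj(q). *)
Lemma qform_ge0 M (Rm : 'M[R[i]]_M) q : psd Rm -> 0 <= qform Rm q.
Proof.
case=> _ /(_ (map_mx (@conjc R) q)).
suff -> : qform Rm q = (ctr (map_mx (@conjc R) q) *m Rm *m map_mx (@conjc R) q) 0 0 by [].
have trmx11 (A : 'M[R[i]]_1) : A 0 0 = A^T 0 0 by rewrite mxE.
rewrite /qform [RHS]trmx11 /ctr !trmx_mul !trmxK -map_mx_comp.
rewrite (_ : map_mx (_ \o _) q = q) ?mulmxA //.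
by apply/matrixP => i j; rewrite !mxE /= conjcK.
Qed.

Lemma crb_num_gt0 (T : nat) (s2 : R) (alpha : R[i]) :
  (0 < T)%N -> alpha != 0 -> 0 < s2 -> 0 < crb_num T s2 alpha.
Proof.
move=> T_gt0 alpha_neq0 s2_gt0.
apply: divr_gt0; first by rewrite ltcE /= eqxx s2_gt0.
by rewrite !mulr_gt0 // ?ltr0n // normr_gt0.
Qed.

Lemma sqnorm_steer K (dh lam th : R) : sqnorm (steer K dh lam th) = (K%:R)%:C.
Proof.
rewrite sqnormE (eq_bigr (fun _ => 1)) => [|k _]; last by rewrite mxE expjJ_mul.
by rewrite sumr_const card_ord rmorph_nat.
Qed.

Lemma sqnorm_dsteer K (dh lam th : R) : lam != 0 ->
  sqnorm (dsteer K dh lam th) =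
    (((pi : R) ^+ 2 * dh ^+ 2 * (cos th) ^+ 2 * K%:R * (K%:R - 1) * (K%:R + 1))
      / (3 * lam ^+ 2))%:C.
Proof.
move=> lam_neq0; set c := (pi : R) * dh * cos th / lam.
have entry k : (dsteer K dh lam th k 0)^* * dsteer K dh lam th k 0
               = (c ^+ 2 * idxc R k ^+ 2)%:C.
  rewrite !mxE; set s := expj _; set a := idxc R k; rewrite !rmorphM /=.
  rewrite [LHS](_ : _ = ((c *i)^* * c *i) * (a%:C^* * a%:C) * (s^* * s)); last by ring.
  by rewrite expjJ_mul mulr1; simpc; apply/eqP; rewrite eq_complex /= !eqxx.
rewrite sqnormE (eq_bigr _ (fun k _ => entry k)) -(@rmorph_sum _ _ (real_complex R)).
by rewrite -mulr_sumr /idxc sum_sqr_idx; congr (_ %:C); rewrite /c; field.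
Qed.

End SteeringVectors.

Theorem proposition5 (R : realType) (dh lam : R) (N Mt Mr T : nat)
  (Gt : 'M[R[i]]_(N, Mt)) (Gr : 'M[R[i]]_(Mr, N)) (alpha : R[i]) (s2 th : R)
  (Rm : 'M[R[i]]_Mt) (phi : 'I_N -> R) :
  0 < dh -> 0 < lam ->
  (0 < N)%N -> (0 < Mt)%N -> (0 < Mr)%N -> (0 < T)%N ->
  alpha != 0 -> 0 < s2 -> psd Rm ->
  0 < den2 Mr dh lam th Gt Rm (Phimx phi) ->
  sqnorm (steer Mr dh lam th) = (Mr%:R)%:C /\
  sqnorm (dsteer Mr dh lam th) =
    (((pi : R) ^+ 2 * dh ^+ 2 * (cos th) ^+ 2 * Mr%:R * (Mr%:R - 1) * (Mr%:R + 1))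
      / (3 * lam ^+ 2))%:C /\
  (sqnorm (p_r dh lam th Gr (Phimx phi)) > sqnorm (steer Mr dh lam th) ->
   sqnorm (dp_r dh lam th Gr (Phimx phi)) > sqnorm (dsteer Mr dh lam th) ->
   CRB1 T dh lam th s2 alpha Gt Gr Rm (Phimx phi)
     < CRB2 Mr T dh lam th s2 alpha Gt Rm (Phimx phi)).
Proof.
move=> _ lam_gt0 _ _ _ T_gt0 alpha_neq0 s2_gt0 psdR den2_gt0.
split; first exact: sqnorm_steer.
split; first by apply: sqnorm_dsteer; rewrite gt_eqF.
move=> lt_pr lt_dpr.
apply: ltr_pdiv2l; [exact: crb_num_gt0 | exact: den2_gt0 |].
by apply: ltr_nneg_comb; rewrite ?qform_ge0.
Qed.
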